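(* Let $\phi$ be an instance of \textsc{Max (2,3)-SAT} with $n$ variables and let $T_\phi$ be the tournament instance constructed from $\phi$ as described in the context. If $T_\phi$ has a seeding whose tournament value is at least $k+n$, then $\phi$ admits an assignment that satisfies at least $k$ clauses.
   Context: Tournament model: players form a finite set of size $2^{n'}$ totally ordered by strength (stronger beats weaker). A seeding is a bijection $\sigma$ from players to $[2^{n'}]$. In round $r=1,\dots,n'$, for each block of seed positions $\{(k-1)2^r+1,\dots,k2^r\}$, the winner $a$ of its first half $\{(k-1)2^r+1,\dots,(k-1)2^r+2^{r-1}\}$ plays the winner $b$ of its second half (a single-position block is won by the player seeded there), the stronger one wins the block, and the game has value $v(a,b)$ (values do not depend on the round). The tournament value is the sum of values of all games played. \textsc{Max (2,3)-SAT} instance: a CNF formula $\phi$ with variables $x_1,\dots,x_n$ and clauses $c_1,\dots,c_m$, each clause having exactly two literals and each variable appearing in at most three clauses. Construction of $T_\phi$: let $n'$ be the smallest integer with $16n\le 2^{n'}$ and $p=2^{n'}-16n$. Players: for each $i\in[n]$, variable players $x_i,x_i^T,x_i^F$ and special players $\widehat d_i,d_i,\widetilde d_i$; for each clause $c$, a clause player $c$; dummy players $f_1,\dots,f_{10n+p-m}$. Strength order (strongest first): $\widehat d_1>d_1>\widetilde d_1>\widehat d_2>d_2>\widetilde d_2>\dots>\widehat d_n>d_n>\widetilde d_n>x_1>x_1^T>x_1^F>\dots>x_n>x_n^T>x_n^F>c_1>\dots>c_m>f_1>\dots>f_{10n+p-m}$. Round-oblivious symmetric game values ($v(a,b)=v(b,a)$):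 for each $i$, $v(x_i,x_i^T)=v(x_i,x_i^F)=1$; for each clause $c$ containing a literal of variable $x$, $v(c,x^T)=1$ if $x$ appears non-negated in $c$ and $v(c,x^F)=1$ if it appears negated; for each $i$, $v(d_i,\widehat d_i)=v(d_i,\widetilde d_i)=v(d_i,x_i)=0$; for each $i$ and every player $Y$ for which the pair value has not been set above, $v(d_i,Y)=v(x_i,Y)=-5$; all remaining pairs have value $0$. Thus the values lie in $\{0,1,-5\}$. *)

From mathcomp Require Import all_boot all_order all_algebra all_fingroup.
Set Implicit Arguments. Unset Strict Implicit. Unset Printing Implicit Defensive.
Import Order.TTheory GRing.Theory Num.Theory.

(* A literal is (variable index, polarity); polarity true = non-negated.
   Variables are x_0, ..., x_{n-1} (0-indexed). *)
Definition literal := (nat * bool)%type.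
Definition clause := (literal * literal)%type.

Definition clause_has (c : clause) (l : literal) : bool := (c.1 == l) || (c.2 == l).
Definition clause_has_var (c : clause) (i : nat) : bool := (c.1.1 == i) || (c.2.1 == i).

Definition max23sat (n : nat) (phi : seq clause) : Prop :=
  (forall c, c \in phi -> [/\ c.1.1 < n, c.2.1 < n & c.1 != c.2]) /\
  (forall i, i < n -> count (fun c => clause_has_var c i) phi <= 3).

Definition lit_true (a : nat -> bool) (l : literal) : bool := a l.1 == l.2.
Definition clause_sat (a : nat -> bool) (c : clause) : bool :=
  lit_true a c.1 || lit_true a c.2.
Definition num_sat (a : nat -> bool) (phi : seq clause) : nat :=
  count (clause_sat a) phi.

(* n' = smallest integer with 16 n <= 2^n'  (up_log 2 m is the smallest e
   with m <= 2^e). *)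
Definition nprime (n : nat) : nat := up_log 2 (16 * n).

(* Players are identified with their strength rank r in [0, 2^n'), rank 0
   being the strongest.  Following the strength order of the paper:
     ranks 3i, 3i+1, 3i+2            : dhat_i, d_i, dtilde_i   (i < n)
     ranks 3n+3i, 3n+3i+1, 3n+3i+2   : x_i, x_i^T, x_i^F       (i < n)
     ranks 6n+j                      : clause player c_j       (j < m)
     ranks 6n+m+j                    : dummy player f_j        (j < 10n+p-m) *)
Inductive kind :=
| KDhat of nat | KD of nat | KDtil of nat
| KX of nat | KXT of nat | KXF of nat
| KC of nat | KF of nat.

Definition kind_of (n m r : nat) : kind :=
  if r < 3 * n then
    (if r %% 3 == 0 then KDhat (r %/ 3)
     else if r %% 3 == 1 then KD (r %/ 3) else KDtil (r %/ 3))
  else if r < 6 * n then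
    (let r' := r - 3 * n in
     if r' %% 3 == 0 then KX (r' %/ 3)
     else if r' %% 3 == 1 then KXT (r' %/ 3) else KXF (r' %/ 3))
  else if r < 6 * n + m then KC (r - 6 * n)
  else KF (r - 6 * n - m).

Definition clause_at (phi : seq clause) (j : nat) : clause :=
  nth ((0, true), (0, true)) phi j.

(* Values set explicitly by the first three rules (in one orientation). *)
Definition set_val (phi : seq clause) (a b : kind) : option int :=
  match a, b with
  | KX i, KXT j => if i == j then Some 1%R else None
  | KX i, KXF j => if i == j then Some 1%R else None
  | KC j, KXT i => if clause_has (clause_at phi j) (i, true) then Some 1%R else None
  | KC j, KXF i => if clause_has (clause_at phi j) (i, false) then Some 1%R else None
  | KD i, KDhat j => if i == j then Some 0%R else None
  | KD i, KDtil j => if i == j then Some 0%R else None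
  | KD i, KX j => if i == j then Some 0%R else None
  | _, _ => None
  end.

Definition is_d_or_x (a : kind) : bool :=
  match a with KD _ | KX _ => true | _ => false end.

Definition game_val (phi : seq clause) (a b : kind) : int :=
  match set_val phi a b, set_val phi b a with
  | Some z, _ => z
  | None, Some z => z
  | None, None => if is_d_or_x a || is_d_or_x b then (-5)%R else 0%R
  end.

Definition v_phi (n : nat) (phi : seq clause) (ra rb : nat) : int :=
  game_val phi (kind_of n (size phi) ra) (kind_of n (size phi) rb).

(* Tournament on 2^N' positions (0-indexed), [seat q] = rank of the player
   seated at position q.  [winner seat r k] = winner (the stronger, i.e. the
   smaller rank) of the k-th block of size 2^r, positions k 2^r .. (k+1) 2^r - 1. *)
Fixpoint winner (seat : nat -> nat) (r k : nat) : nat :=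
  match r with
  | 0 => seat k
  | r'.+1 => minn (winner seat r' k.*2) (winner seat r' k.*2.+1)
  end.

(* Sum of values of all games: in round r (1 <= r <= N'), block k (k < 2^(N'-r))
   is the game between the winners of blocks 2k and 2k+1 of round r-1. *)
Definition tourn_value (v : nat -> nat -> int) (N' : nat) (seat : nat -> nat) : int :=
  (\sum_(1 <= r < N'.+1) \sum_(0 <= k < 2 ^ (N' - r))
      v (winner seat r.-1 k.*2) (winner seat r.-1 k.*2.+1))%R.

(* A seeding sigma : players -> positions is a permutation of 'I_(2^n')
   (players identified with their ranks); the player at position q is sigma^-1 q. *)
Definition seat_of (N : nat) (sigma : {perm 'I_N}) (q : nat) : nat :=
  oapp (fun i : 'I_N => val ((sigma^-1)%g i)) 0 (insub q).

Definition T_value (n : nat) (phi : seq clause) (sigma : {perm 'I_(2 ^ nprime n)}) : int :=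
  tourn_value (v_phi n phi) (nprime n) (seat_of sigma).
Arguments T_value : clear implicits.

(* Every player loses at most one game, so each game of value 1 can be charged to
   the player it eliminates: for each variable x_i there is at most one game
   x_i vs x_i^T, at most one game x_i vs x_i^F, and at most three games in which x_i^T
   or x_i^F eliminates a clause player whose clause contains x_i.  Set x_i to the
   polarity whose literal player eliminated more clause players; every eliminated
   clause is then satisfied, and x_i accounts for at most 1 + (its satisfied
   clauses) games of value 1, unless x_i beats both x_i^T and x_i^F, or beats one
   of them while x_i^T and x_i^F both win games.  Either way some game of value -5
   involves x_i or d_i: in the second case x_i's first opponent is neither x_i^T
   nor x_i^F; in the first case x_i survives two rounds and eventually loses,
   either to a player other than d_i or to d_i, whose first two opponents cannot
   both be dtilde_i.  Each game of value -5 is charged to at most two variables, so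
   the number P of games of value 1 and the number Q of games of value -5 satisfy
   P <= n + #satisfied + 4 Q, while the tournament value is P - 5 Q. *)

From HB Require Import structures.
From mathcomp Require Import all_boot all_order all_algebra all_fingroup.
From mathcomp Require Import zify.
Import Order.TTheory GRing.Theory Num.Theory.
Set Implicit Arguments. Unset Strict Implicit. Unset Printing Implicit Defensive.

Lemma divn_exp2S q r : q %/ 2 ^ r.+1 = q %/ 2 ^ r %/ 2.
Proof. by rewrite expnSr divnMA. Qed.

Lemma divn_exp2_le q r R : r <= R -> q %/ 2 ^ R = q %/ 2 ^ r %/ 2 ^ (R - r).
Proof. by move=> le_rR; rewrite -divnMA -expnD subnKC. Qed.

Lemma exists_fall (b : nat -> bool) r R :
  b r -> ~~ b R -> r <= R -> exists2 t, r <= t < R & b t && ~~ b t.+1.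
Proof.
move=> b_r; elim: R => [|R IHR] not_bR le_rR.
  by move: le_rR b_r; rewrite leqn0 => /eqP ->; rewrite (negbTE not_bR).
have le_rR' : r <= R.
  by rewrite -ltnS ltn_neqAle le_rR andbT; apply: contraNneq not_bR => eq_r; rewrite -eq_r.
case b_R: (b R); first by exists R; rewrite ?le_rR' ?b_R ?ltnSn.
have [t /andP[le_rt lt_tR] fall_t] := IHR (negbT b_R) le_rR'.
by exists t; rewrite // le_rt ltnS ltnW.
Qed.

Section Bracket.
Variables (N : nat) (seat : nat -> nat).
Local Notation W := (winner seat).

Definition loser r k := maxn (W r k.*2) (W r k.*2.+1).
(* [(r, k)] is the game of round [r.+1] between the winners of blocks [k.*2] and
   [k.*2.+1] of round [r]; its winner is [W r.+1 k]. *)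
Definition is_game r k := (r < N) && (k < 2 ^ (N - r.+1)).
Definition survives p r := exists2 q, q < 2 ^ N & seat q = p /\ W r (q %/ 2 ^ r) = p.

Lemma winner_le_seat r q : W r (q %/ 2 ^ r) <= seat q.
Proof.
elim: r q => [|r IHr] q /=; first by rewrite expn0 divn1.
rewrite divn_exp2S; have := IHr q; set k := q %/ 2 ^ r %/ 2.
have [->|->] : q %/ 2 ^ r = k.*2 \/ q %/ 2 ^ r = k.*2.+1 by lia.
all: by rewrite geq_min => ->; rewrite ?orbT.
Qed.

Lemma winner_seated r k : exists2 q, q %/ 2 ^ r = k & W r k = seat q.
Proof.
elim: r k => [|r IHr] k /=; first by exists k; rewrite ?expn0 ?divn1.
have [q1 q1k ->] := IHr k.*2; have [q2 q2k ->] := IHr k.*2.+1.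
case: leqP => _; [exists q1 | exists q2]; rewrite // divn_exp2S ?q1k ?q2k; lia.
Qed.

Lemma winner_mono r R q :
  r <= R -> W R (q %/ 2 ^ R) = seat q -> W r (q %/ 2 ^ r) = seat q.
Proof.
move=> le_rR WRq; apply/eqP; rewrite eqn_leq winner_le_seat /= -WRq.
have [q' q'k ->] := winner_seated r (q %/ 2 ^ r).
by rewrite (divn_exp2_le q le_rR) -q'k -divn_exp2_le // winner_le_seat.
Qed.

Lemma survives_le p r R : r <= R -> survives p R -> survives p r.
Proof.
move=> le_rR [q q_lt [<- WRq]]; exists q => //; split=> //.
exact: winner_mono WRq.
Qed.

Lemma game_of_pos r q : r < N -> q < 2 ^ N -> is_game r (q %/ 2 ^ r.+1).
Proof.
move=> lt_rN q_lt; rewrite /is_game lt_rN ltn_divLR ?expn_gt0 // -expnD subnK //.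
Qed.

Lemma pos_of_game r k q : is_game r k -> q %/ 2 ^ r.+1 = k -> q < 2 ^ N.
Proof.
case/andP=> lt_rN lt_k q_k; move: lt_k.
by rewrite -q_k ltn_divLR ?expn_gt0 // -expnD subnK.
Qed.

Lemma divn_exp2S_half q r k :
  q %/ 2 ^ r = k.*2 \/ q %/ 2 ^ r = k.*2.+1 -> q %/ 2 ^ r.+1 = k.
Proof. by rewrite divn_exp2S; case=> ->; lia. Qed.

Lemma game_player r k p : is_game r k -> p = W r k.*2 \/ p = W r k.*2.+1 ->
  exists2 q, q < 2 ^ N & [/\ seat q = p, W r (q %/ 2 ^ r) = p & q %/ 2 ^ r.+1 = k].
Proof.
move=> game_rk p_in.
have [q q_half [Wq seat_q]] : exists2 q, q %/ 2 ^ r = k.*2 \/ q %/ 2 ^ r = k.*2.+1 &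
    W r (q %/ 2 ^ r) = p /\ seat q = p.
  case: p_in => ->.
  - by have [q q_k W_q] := winner_seated r k.*2; exists q; rewrite ?q_k; auto.
  - by have [q q_k W_q] := winner_seated r k.*2.+1; exists q; rewrite ?q_k; auto.
have q_k := divn_exp2S_half q_half.
by exists q; [exact: pos_of_game q_k | split].
Qed.

Definition ngames (P : nat -> nat -> bool) : nat :=
  \sum_(g : 'I_N * 'I_(2 ^ N) | is_game g.1 g.2) P g.1 g.2.

Lemma ngames_mono (P Q : nat -> nat -> bool) :
  (forall r k, is_game r k -> P r k -> Q r k) -> ngames P <= ngames Q.
Proof.
by move=> PQ; apply: leq_sum => g game_g; case: (P _ _) (PQ _ _ game_g) => // ->.
Qed.

Lemma ngames_gt0 (P : nat -> nat -> bool) :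
  0 < ngames P -> exists r k, is_game r k /\ P r k.
Proof.
rewrite lt0n sum_nat_eq0 => /forallPn[g]; rewrite negb_imply eqb0 negbK => /andP[game_g P_g].
by exists g.1, g.2.
Qed.

Lemma ngames_witness (P : nat -> nat -> bool) r k :
  is_game r k -> P r k -> 0 < ngames P.
Proof.
move=> game_rk P_rk; have /andP[lt_rN lt_k] := game_rk.
have lt_kN : k < 2 ^ N by apply: leq_trans lt_k _; rewrite leq_pexp2l // leq_subr.
by rewrite /ngames (bigD1 (Ordinal lt_rN, Ordinal lt_kN)) //= P_rk.
Qed.

Lemma tourn_value_games (v : nat -> nat -> int) : (forall a b, v a b = v b a) ->
  tourn_value v N seat =
  (\sum_(g : 'I_N * 'I_(2 ^ N) | is_game g.1 g.2) v (W g.1.+1 g.2) (loser g.1 g.2))%R.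
Proof.
move=> vC; rewrite /tourn_value big_add1 /= big_mkord.
rewrite (eq_bigr (fun r : 'I_N =>
  \sum_(k < 2 ^ N | (k < 2 ^ (N - r.+1))%N) v (W r.+1 k) (loser r k))%R); last first.
  move=> r _; rewrite (big_nat_widen _ _ (2 ^ N)) ?leq_pexp2l ?leq_subr // big_mkord.
  by apply: eq_bigr => k _; rewrite /loser /=; case: leqP => _; rewrite // vC.
by rewrite pair_big_dep; apply: eq_bigl => g; rewrite /is_game ltn_ord.
Qed.

Hypothesis seat_inj : forall q q', q < 2 ^ N -> q' < 2 ^ N -> seat q = seat q' -> q = q'.

Lemma winner_lt_loser r k : is_game r k -> W r.+1 k < loser r k.
Proof.
move=> game_rk; rewrite /= /loser.
have [q1 q1_k W1] := winner_seated r k.*2; have [q2 q2_k W2] := winner_seated r k.*2.+1.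
suff : W r k.*2 != W r k.*2.+1 by lia.
apply/eqP; rewrite W1 W2 => /seat_inj eq_q.
have lt_q1 : q1 < 2 ^ N by apply: pos_of_game game_rk _; apply: divn_exp2S_half; left.
have lt_q2 : q2 < 2 ^ N by apply: pos_of_game game_rk _; apply: divn_exp2S_half; right.
by move: q1_k; rewrite eq_q // q2_k; lia.
Qed.

Lemma winner_in_game r k : W r.+1 k = W r k.*2 \/ W r.+1 k = W r k.*2.+1.
Proof. by rewrite /=; lia. Qed.

Lemma loser_in_game r k : loser r k = W r k.*2 \/ loser r k = W r k.*2.+1.
Proof. by rewrite /loser; lia. Qed.

Lemma winner_survives r k : is_game r k -> survives (W r.+1 k) r.+1.
Proof.
move=> game_rk; have [q q_lt [seat_q _ q_k]] := game_player game_rk (winner_in_game r k).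
by exists q; rewrite ?q_k.
Qed.

Lemma survivor_wins p r : r < N -> survives p r.+1 ->
  exists2 k, is_game r k & W r.+1 k = p.
Proof. by move=> lt_rN [q q_lt [_ W_q]]; exists (q %/ 2 ^ r.+1); rewrite ?game_of_pos. Qed.

Lemma loser_not_survives r k p : is_game r k -> survives p r.+1 -> loser r k <> p.
Proof.
move=> game_rk [q q_lt [<- W_q]] lose_q.
have [q' q'_lt [seat_q' _ q'_k]] := game_player game_rk (loser_in_game r k).
have eq_q : q' = q by apply: seat_inj; rewrite // seat_q'.
have := winner_lt_loser game_rk.
by rewrite lose_q -q'_k eq_q W_q ltnn.
Qed.

Lemma loser_inj r k r' k' : is_game r k -> is_game r' k' ->
  loser r k = loser r' k' -> r = r' /\ k = k'.
Proof.
move=> game_rk game_rk' eq_lose.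
have [q q_lt [seat_q W_q q_k]] := game_player game_rk (loser_in_game r k).
have [q' q'_lt [seat_q' W_q' q'_k]] := game_player game_rk' (loser_in_game r' k').
have eq_q : q' = q by apply: seat_inj; rewrite // seat_q seat_q'.
subst q'; case: (ltngtP r r') => [lt_rr'|lt_r'r|eq_r]; last by subst r'; rewrite -q_k -q'_k.
- have : survives (loser r' k') r.+1 by apply: (survives_le lt_rr'); exists q.
  by move/(loser_not_survives game_rk).
- have : survives (loser r k) r'.+1 by apply: (survives_le lt_r'r); exists q.
  by move/(loser_not_survives game_rk')/(_ (esym eq_lose)).
Qed.

Lemma winner_inj r k k' : is_game r k -> is_game r k' -> W r.+1 k = W r.+1 k' -> k = k'.
Proof.
move=> game_rk game_rk' eq_win.
have [q q_lt [seat_q _ q_k]] := game_player game_rk (winner_in_game r k).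
have [q' q'_lt [seat_q' _ q'_k]] := game_player game_rk' (winner_in_game r k').
have eq_q : q' = q by apply: seat_inj; rewrite // seat_q seat_q'.
by rewrite -q_k -q'_k eq_q.
Qed.

Lemma survivor_loses p r : survives p r -> ~ survives p N ->
  exists R k, [/\ r <= R, is_game R k & loser R k = p].
Proof.
move=> [q q_lt [seat_q W_q]] not_champion.
have le_rN : r <= N.
  rewrite leqNgt; apply/negP => lt_Nr; apply: not_champion; exists q => //; split => //.
  by rewrite -seat_q; apply: (winner_mono (ltnW lt_Nr)); rewrite seat_q.
have [R /andP[le_rR lt_RN] /andP[/eqP W_qR not_W_qR]] :
    exists2 R, r <= R < N & (W R (q %/ 2 ^ R) == p) && (W R.+1 (q %/ 2 ^ R.+1) != p).
  apply: exists_fall => //; first exact/eqP.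
  by apply/eqP=> W_qN; apply: not_champion; exists q.
exists R, (q %/ 2 ^ R.+1); split; rewrite ?game_of_pos //.
have : q %/ 2 ^ R = (q %/ 2 ^ R.+1).*2 \/ q %/ 2 ^ R = (q %/ 2 ^ R.+1).*2.+1.
  by rewrite divn_exp2S; lia.
by case=> half; move: W_qR not_W_qR; rewrite /loser /= half; lia.
Qed.

Lemma champion_le p q : survives p N -> q < 2 ^ N -> p <= seat q.
Proof.
move=> [q' q'_lt [_ <-]] q_lt.
by rewrite !divn_small // -(divn_small q_lt) winner_le_seat.
Qed.
End Bracket.

Definition kind_code (x : kind) : nat * nat :=
  match x with
  | KDhat i => (0, i) | KD i => (1, i) | KDtil i => (2, i)
  | KX i => (3, i) | KXT i => (4, i) | KXF i => (5, i)
  | KC j => (6, j) | KF j => (7, j)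
  end.

Definition kind_decode (c : nat * nat) : option kind :=
  match c with
  | (0, i) => Some (KDhat i) | (1, i) => Some (KD i) | (2, i) => Some (KDtil i)
  | (3, i) => Some (KX i) | (4, i) => Some (KXT i) | (5, i) => Some (KXF i)
  | (6, j) => Some (KC j) | (7, j) => Some (KF j) | _ => None
  end.

Lemma kind_codeK : pcancel kind_code kind_decode. Proof. by case. Qed.

HB.instance Definition _ := Equality.copy kind (pcan_type kind_codeK).

Section KindRank.
Variables n m : nat.

Definition kind_rank (x : kind) : nat :=
  match x with
  | KDhat i => 3 * i | KD i => 3 * i + 1 | KDtil i => 3 * i + 2
  | KX i => 3 * n + 3 * i | KXT i => 3 * n + 3 * i + 1 | KXF i => 3 * n + 3 * i + 2
  | KC j => 6 * n + j | KF j => 6 * n + m + j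
  end.

Definition kind_bounded (x : kind) : bool :=
  match x with
  | KDhat i | KD i | KDtil i | KX i | KXT i | KXF i => i < n
  | KC j => j < m
  | KF _ => true
  end.

Lemma kind_ofK : cancel (kind_of n m) kind_rank.
Proof. by move=> r; rewrite /kind_of; repeat case: ifP => /= ?; lia. Qed.

Lemma kind_of_inj : injective (kind_of n m).
Proof. exact: can_inj kind_ofK. Qed.

Lemma kind_of_bounded r : kind_bounded (kind_of n m r).
Proof. by rewrite /kind_of; repeat case: ifP => /= ?; lia. Qed.

Lemma kind_of_rank r x : kind_of n m r = x -> r = kind_rank x.
Proof. by move=> <-; rewrite kind_ofK. Qed.

End KindRank.

Section GameValues.
Variable phi : seq clause.
Local Notation gv := (game_val phi).

Definition literal_kind (l : literal) : kind := if l.2 then KXT l.1 else KXF l.1.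

Definition clause_player (P : pred clause) (x : kind) : bool :=
  if x is KC j then P (clause_at phi j) else false.

Definition beats_own_literal (l : literal) (w z : kind) : bool :=
  (w == KX l.1) && (z == literal_kind l).

Definition literal_beats_clause (l : literal) (w z : kind) : bool :=
  (w == literal_kind l) && clause_player (clause_has^~ l) z.

Definition var_player (i : nat) (x : kind) : bool := (x == KD i) || (x == KX i).

Definition penalty (i : nat) (x y : kind) : bool :=
  (gv x y == (-5)%R) && (var_player i x || var_player i y).

Lemma set_val_one_way x y : (set_val phi x y == None) || (set_val phi y x == None).
Proof. by case: x => a; case: y => b; rewrite /= ?orbT. Qed.

Lemma game_valC x y : gv x y = gv y x.
Proof.
rewrite /game_val; have := set_val_one_way x y.
by case: (set_val phi x y) => [z|]; case: (set_val phi y x) => [z'|] //= _; rewrite orbC.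
Qed.

Lemma set_val_cases x y : set_val phi x y = None \/ set_val phi x y = Some 1%R
  \/ set_val phi x y = Some 0%R.
Proof. by case: x => a; case: y => b /=; repeat case: ifP => _; auto. Qed.

Lemma game_val_cases x y : gv x y = 1%R \/ gv x y = 0%R \/ gv x y = (-5)%R.
Proof.
rewrite /game_val; case: (set_val_cases x y) => [->|[->|->]]; auto.
by case: (set_val_cases y x) => [->|[->|->]]; try case: ifP; auto.
Qed.

Lemma set_val_eq1 x y : set_val phi x y = Some 1%R ->
  exists l, beats_own_literal l x y || literal_beats_clause l y x.
Proof.
case: x => a; case: y => b //=; case: ifP => // eq_ab _.
- by exists (a, true); rewrite /beats_own_literal (eqP eq_ab) !eqxx.
- by exists (a, false); rewrite /beats_own_literal (eqP eq_ab) !eqxx.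
- by exists (b, true); rewrite /literal_beats_clause /= eqxx.
- by exists (b, false); rewrite /literal_beats_clause /= eqxx.
Qed.

Lemma game_val_eq1 x y : gv x y = 1%R -> exists l : literal,
  [|| beats_own_literal l x y, beats_own_literal l y x,
      literal_beats_clause l x y | literal_beats_clause l y x].
Proof.
rewrite /game_val.
case: (set_val_cases x y) => [Exy|[Exy|Exy]]; rewrite Exy //.
  case: (set_val_cases y x) => [Eyx|[Eyx|Eyx]]; rewrite Eyx //; first by case: ifP.
  by move=> _; have [l /orP[] own] := set_val_eq1 Eyx; exists l; rewrite own ?orbT.
by move=> _; have [l /orP[] own] := set_val_eq1 Exy; exists l; rewrite own ?orbT.
Qed.

Lemma game_val_KX i y : y != KD i -> y != KXT i -> y != KXF i -> gv (KX i) y = (-5)%R.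
Proof. by case: y => b; rewrite /game_val /=; repeat case: eqP => //= ?; congruence. Qed.

Lemma game_val_KD i y : y != KDhat i -> y != KDtil i -> y != KX i -> gv (KD i) y = (-5)%R.
Proof. by case: y => b; rewrite /game_val /=; repeat case: eqP => //= ?; congruence. Qed.

Lemma literal_kind_inj : injective literal_kind.
Proof. by case=> i [] [j []] //= [->]. Qed.

Lemma clause_player_sub (P Q : pred clause) x :
  (forall c, P c -> Q c) -> clause_player P x -> clause_player Q x.
Proof. by case: x => // j PQ /PQ. Qed.

Lemma var_player_inj i j x : var_player i x -> var_player j x -> i = j.
Proof. by case: x => // a; rewrite /var_player => /orP[]/eqP ? /orP[]/eqP ?; congruence. Qed.

Lemma penaltyC i x y : penalty i x y = penalty i y x.
Proof. by rewrite /penalty game_valC orbC. Qed.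

Lemma penalty_KX i y : y != KD i -> y != KXT i -> y != KXF i -> penalty i (KX i) y.
Proof. by move=> *; rewrite /penalty game_val_KX // /var_player !eqxx orbT. Qed.

Lemma penalty_KD i y : y != KDhat i -> y != KDtil i -> y != KX i -> penalty i (KD i) y.
Proof. by move=> *; rewrite /penalty game_val_KD // /var_player !eqxx. Qed.

End GameValues.

Lemma sum_unique_le (I : finType) (Q P : pred I) (b : bool) :
  (forall i j, Q i -> Q j -> P i -> P j -> i = j) -> (forall i, Q i -> P i -> b) ->
  \sum_(i | Q i) P i <= b.
Proof.
move=> P_uniq P_b; case: (pickP [pred i | Q i && P i]) => [i /andP[Q_i P_i] | no_P].
  rewrite (bigD1 i) //= P_i big1 ?addn0 ?(P_b i) // => j /andP[Q_j ne_ji].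
  by case P_j: (P j) => //; rewrite (P_uniq j i) ?eqxx in ne_ji.
by rewrite big1 // => j Q_j; move: (no_P j); rewrite /= Q_j; case: (P j).
Qed.

Lemma variable_games_bound own ct cf :
  own <= 2 -> ct + cf <= 3 ->
  own + (ct + cf) <= 1 + maxn ct cf + 2 * (2 <= own + minn ct cf).
Proof. by case: leqP; lia. Qed.

Lemma count_clause_at (P : pred clause) (s : seq clause) :
  count P s = \sum_(j < size s) P (clause_at s j).
Proof.
rewrite -sum1_count (big_nth ((0, true), (0, true))) big_mkord big_mkcond.
by apply: eq_bigr => j _; rewrite /clause_at; case: (P _).
Qed.

Lemma clause_has_var_of c i b : clause_has c (i, b) -> clause_has_var c i.
Proof. by rewrite /clause_has_var; case/orP=> /eqP->; rewrite eqxx ?orbT. Qed.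

Lemma clause_has_sat a c l : clause_has c l -> lit_true a l -> clause_sat a c.
Proof. by rewrite /clause_sat; case/orP=> /eqP-> ->; rewrite ?orbT. Qed.

Section Tournament.
Variables (n : nat) (phi : seq clause) (N : nat) (seat : nat -> nat).
Hypothesis seat_inj : forall q q', q < 2 ^ N -> q' < 2 ^ N -> seat q = seat q' -> q = q'.
Local Notation K := (kind_of n (size phi)).
Local Notation rank := (kind_rank n (size phi)).
Local Notation Kw r k := (K (winner seat r.+1 k)).
Local Notation Kl r k := (K (loser seat r k)).
Local Notation game := (is_game N).
Local Notation survives := (survives N seat).
Local Notation ngames := (ngames N).

Lemma winner_stronger r k : game r k -> rank (Kw r k) < rank (Kl r k).
Proof. by move/(winner_lt_loser seat_inj); rewrite !kind_ofK. Qed.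

Lemma kind_of_KX_lt i p : K p = KX i -> i < n.
Proof. by move=> Kp; have := kind_of_bounded n (size phi) p; rewrite Kp. Qed.

Lemma penalty_X_wins i r k : game r k -> Kw r k = KX i ->
  Kl r k != KXT i -> Kl r k != KXF i -> penalty phi i (Kw r k) (Kl r k).
Proof.
move=> game_rk win_x not_T not_F; rewrite win_x; apply: penalty_KX => //.
apply/eqP=> lose_d; have := winner_stronger game_rk.
by rewrite win_x lose_d /=; have := kind_of_KX_lt win_x; lia.
Qed.

Lemma penalty_X_loses i r k : game r k -> Kl r k = KX i ->
  Kw r k != KD i -> penalty phi i (Kw r k) (Kl r k).
Proof.
move=> game_rk lose_x not_d; rewrite penaltyC lose_x; apply: penalty_KX => //.
  by apply/eqP=> win_T; have := winner_stronger game_rk; rewrite lose_x win_T /=; lia.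
by apply/eqP=> win_F; have := winner_stronger game_rk; rewrite lose_x win_F /=; lia.
Qed.

Lemma penalty_D_wins i r k : game r k -> Kw r k = KD i ->
  Kl r k != KDtil i -> Kl r k != KX i -> penalty phi i (Kw r k) (Kl r k).
Proof.
move=> game_rk win_d not_til not_x; rewrite win_d; apply: penalty_KD => //.
by apply/eqP=> lose_hat; have := winner_stronger game_rk; rewrite win_d lose_hat /=; lia.
Qed.

Definition has_penalty i := exists r k, game r k /\ penalty phi i (Kw r k) (Kl r k).

Lemma loser_kind_not_survives r k x p :
  game r k -> K p = x -> survives p r.+1 -> Kl r k != x.
Proof.
move=> game_rk <- surv_p; apply/eqP=> /kind_of_inj.
exact: (loser_not_survives seat_inj game_rk surv_p).
Qed.

Lemma penalty_literals_survive_one i r k pT pF : game r k -> Kw r k = KX i ->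
  K pT = KXT i -> K pF = KXF i -> survives pT 1 -> survives pF 1 -> has_penalty i.
Proof.
move=> game_rk win_x KpT KpF surv_T surv_F.
have N_gt0 : 0 < N by case/andP: game_rk => lt_rN _; apply: leq_ltn_trans lt_rN.
have surv_x := survives_le (ltn0Sn r) (winner_survives seat game_rk).
have [k0 game0 win0] := survivor_wins N_gt0 surv_x.
exists 0, k0; split => //; apply: penalty_X_wins; rewrite ?win0 //.
- exact: loser_kind_not_survives game0 KpT surv_T.
- exact: loser_kind_not_survives game0 KpF surv_F.
Qed.

Lemma penalty_D_survives_two i pd px : 1 < N -> K pd = KD i -> K px = KX i ->
  survives pd 2 -> survives px 2 -> has_penalty i.
Proof.
move=> N_gt1 Kpd Kpx surv_d surv_x.
have [k0 game0 win0] := survivor_wins (ltnW N_gt1) (survives_le (leqnSn 1) surv_d).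
have [k1 game1 win1] := survivor_wins N_gt1 surv_d.
have not_x0 := loser_kind_not_survives game0 Kpx (survives_le (leqnSn 1) surv_x).
have not_x1 := loser_kind_not_survives game1 Kpx surv_x.
case: (eqVneq (Kl 0 k0) (KDtil i)) => [til0 | not_til0].
  exists 1, k1; split => //; apply: penalty_D_wins; rewrite ?win1 //.
  apply/eqP; rewrite -til0 => /kind_of_inj /(loser_inj seat_inj game1 game0).
  by case.
by exists 0, k0; split => //; apply: penalty_D_wins; rewrite ?win0.
Qed.

Lemma penalty_X_survives_two i px : (exists2 q, q < 2 ^ N & seat q = 0) ->
  K px = KX i -> survives px 2 -> has_penalty i.
Proof.
move=> [q0 q0_lt seat_q0] Kpx surv_x.
have not_champion : ~ survives px N.
  move/champion_le/(_ q0_lt); rewrite seat_q0 (kind_of_rank Kpx) /=.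
  by have := kind_of_KX_lt Kpx; lia.
have [R [k [le2R gameR loseR]]] := survivor_loses surv_x not_champion.
have lose_x : Kl R k = KX i by rewrite loseR.
case: (eqVneq (Kw R k) (KD i)) => [win_d | not_d]; last first.
  by exists R, k; split => //; apply: penalty_X_loses.
apply: (penalty_D_survives_two _ win_d Kpx _ surv_x).
  by case/andP: gameR; lia.
exact: survives_le (leqW le2R) (winner_survives seat gameR).
Qed.

Lemma penalty_X_beats_both i r k r' k' : (exists2 q, q < 2 ^ N & seat q = 0) ->
  game r k -> Kw r k = KX i -> Kl r k = KXT i ->
  game r' k' -> Kw r' k' = KX i -> Kl r' k' = KXF i -> has_penalty i.
Proof.
move=> top_seated game_rk win lose game' win' lose'.
have eq_win : winner seat r.+1 k = winner seat r'.+1 k'.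
  by apply: (kind_of_inj (n := n) (m := size phi)); rewrite win win'.
have ne_r : r != r'.
  apply/eqP=> eq_r; move: game_rk win lose eq_win; rewrite eq_r => game_rk win lose eq_win.
  by rewrite (winner_inj seat_inj game_rk game' eq_win) lose' in lose.
apply: (penalty_X_survives_two top_seated win).
case: (posnP r) => [r0 | r_gt0]; last first.
  by apply: survives_le (winner_survives seat game_rk); rewrite ltnS.
rewrite eq_win; apply: survives_le (winner_survives seat game'); rewrite r0 eq_sym in ne_r; lia.
Qed.

Definition value r k : int := game_val phi (Kw r k) (Kl r k).
Definition own_win i b r k := beats_own_literal (i, b) (Kw r k) (Kl r k).
Definition clause_win i b r k := literal_beats_clause phi (i, b) (Kw r k) (Kl r k).
Definition own_wins i b := ngames (own_win i b).
Definition clause_wins i b := ngames (clause_win i b).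
Definition majority i := clause_wins i false <= clause_wins i true.
Definition needs_penalty i :=
  2 <= own_wins i true + own_wins i false + minn (clause_wins i true) (clause_wins i false).

Lemma ngames_loser_le1 x : ngames (fun r k => Kl r k == x) <= 1.
Proof.
rewrite /ngames; apply: (@sum_unique_le _ _ _ true) => // -[r k] [r' k'] /=.
move=> game_rk game_rk' /eqP lose /eqP lose'.
have [eq_r eq_k] := loser_inj seat_inj game_rk game_rk' (kind_of_inj (etrans lose (esym lose'))).
by congr pair; apply: val_inj.
Qed.

Lemma own_wins_le1 i b : own_wins i b <= 1.
Proof.
apply: leq_trans (ngames_loser_le1 (literal_kind (i, b))).
by apply: ngames_mono => r k _ /andP[].
Qed.

Lemma clause_losses_le (P : pred clause) :
  ngames (fun r k => clause_player phi P (Kl r k)) <= count P phi.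
Proof.
rewrite count_clause_at /ngames.
apply: (@leq_trans (\sum_(g : 'I_N * 'I_(2 ^ N) | game g.1 g.2)
    \sum_(j < size phi) (P (clause_at phi j) && (Kl g.1 g.2 == KC j) : nat))).
  apply: leq_sum => g _; case lose: (Kl g.1 g.2) => [||||||j|] //=.
  have lt_j : j < size phi.
    by have := kind_of_bounded n (size phi) (loser seat g.1 g.2); rewrite lose.
  by rewrite (bigD1 (Ordinal lt_j)) //= eqxx andbT leq_addr.
rewrite exchange_big /=; apply: leq_sum => j _.
by case: (P _) => /=; [exact: ngames_loser_le1 | rewrite big1].
Qed.

Hypothesis phi_deg : forall i, i < n -> count (fun c => clause_has_var c i) phi <= 3.

Lemma clause_wins_var i : i < n -> clause_wins i true + clause_wins i false <= 3.
Proof.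
move=> lt_in; apply: leq_trans (phi_deg lt_in).
apply: leq_trans (clause_losses_le (fun c => clause_has_var c i)).
rewrite /clause_wins /ngames -big_split /=; apply: leq_sum => g _.
rewrite -(@big_bool _ 0 addn (fun b => nat_of_bool (clause_win i b g.1 g.2))).
apply: sum_unique_le => [b b' _ _ /andP[/eqP win _] /andP[/eqP win' _] | b _ /andP[_]].
  by case: (literal_kind_inj (etrans (esym win) win')).
by apply: clause_player_sub => c /clause_has_var_of.
Qed.

Lemma clause_wins_sat (a : nat -> bool) : \sum_(i < n) clause_wins i (a i) <= num_sat a phi.
Proof.
apply: leq_trans (clause_losses_le (clause_sat a)).
rewrite /clause_wins /ngames exchange_big /=; apply: leq_sum => g _.
apply: sum_unique_le => [i j _ _ /andP[/eqP win_i _] /andP[/eqP win_j _] | i _ /andP[_]].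
  by apply: val_inj; case: (literal_kind_inj (etrans (esym win_i) win_j)).
by apply: clause_player_sub => c /clause_has_sat; apply; rewrite /lit_true eqxx.
Qed.

Lemma positive_game_cases r k : game r k -> value r k = 1%R ->
  exists2 l : literal, l.1 < n &
    beats_own_literal l (Kw r k) (Kl r k) || literal_beats_clause phi l (Kw r k) (Kl r k).
Proof.
move=> game_rk /game_val_eq1[l]; have stronger := winner_stronger game_rk.
case: l => i b /or4P[own|own|beat|beat].
- exists (i, b); rewrite ?own //.
  by case/andP: own => /eqP/kind_of_KX_lt.
- case/andP: own => /eqP lose /eqP win; move: stronger.
  by rewrite lose win; case: b {lose win} => /=; lia.
- exists (i, b); rewrite ?beat ?orbT //.
  case/andP: beat => /eqP win _; have := kind_of_bounded n (size phi) (winner seat r.+1 k).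
  by rewrite win; case: b {win}.
- case/andP: beat => /eqP lose; case win: (Kw r k) => [||||||j|] // _.
  have := kind_of_bounded n (size phi) (loser seat r k); move: stronger.
  by rewrite lose win; case: b {lose} => /=; lia.
Qed.

Lemma positive_games_le : ngames (fun r k => value r k == 1%R) <=
  \sum_(i < n) (own_wins i true + own_wins i false +
                (clause_wins i true + clause_wins i false)).
Proof.
apply: (@leq_trans (\sum_(g : 'I_N * 'I_(2 ^ N) | game g.1 g.2) \sum_(i < n)
    (own_win i true g.1 g.2 + own_win i false g.1 g.2
     + (clause_win i true g.1 g.2 + clause_win i false g.1 g.2)))).
  apply: leq_sum => g game_g; case: eqP => //= pos.
  have [[i b] lt_in won] := positive_game_cases game_g pos.
  have won_i : [|| own_win i true g.1 g.2, own_win i false g.1 g.2,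
                  clause_win i true g.1 g.2 | clause_win i false g.1 g.2].
    by rewrite /own_win /clause_win; case: b won {lt_in} => /orP[] ->; rewrite ?orbT.
  rewrite (bigD1 (Ordinal lt_in)) //; apply: leq_trans (leq_addr _ _).
  by case/or4P: won_i => ->; rewrite ?addnS.
by rewrite exchange_big; apply: leq_sum => i _; rewrite -!big_split.
Qed.

Hypothesis top_seated : exists2 q, q < 2 ^ N & seat q = 0.

Lemma has_penalty_of_needs i : i < n -> needs_penalty i -> has_penalty i.
Proof.
move=> lt_in need; have := clause_wins_var lt_in.
have := own_wins_le1 i true; have := own_wins_le1 i false.
move: need; rewrite /needs_penalty => need leF leT le3.
have [[ownT ownF] | [[b own_b] [winsT winsF]]] :
    (0 < own_wins i true /\ 0 < own_wins i false) \/
    ((exists b, 0 < own_wins i b) /\ 0 < clause_wins i true /\ 0 < clause_wins i false).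
  case: (posnP (own_wins i true)) => [zT | ownT]; last first.
    case: (posnP (own_wins i false)) => [zF | ownF]; last by left.
    by right; split; [exists true | lia].
  by right; split; [exists false | ]; lia.
- have [r [k [game_rk /andP[/eqP win /eqP lose]]]] := ngames_gt0 ownT.
  have [r' [k' [game' /andP[/eqP win' /eqP lose']]]] := ngames_gt0 ownF.
  exact: penalty_X_beats_both top_seated game_rk win lose game' win' lose'.
- have [r [k [game_rk /andP[/eqP win _]]]] := ngames_gt0 own_b.
  have [rT [kT [gameT /andP[/eqP winT _]]]] := ngames_gt0 winsT.
  have [rF [kF [gameF /andP[/eqP winF _]]]] := ngames_gt0 winsF.
  apply: penalty_literals_survive_one game_rk win winT winF _ _.
  + exact: survives_le (ltn0Sn rT) (winner_survives seat gameT).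
  + exact: survives_le (ltn0Sn rF) (winner_survives seat gameF).
Qed.

Lemma needs_penalty_le :
  \sum_(i < n) needs_penalty i <= 2 * ngames (fun r k => value r k == (-5)%R).
Proof.
apply: (@leq_trans (\sum_(i < n) ngames (fun r k => penalty phi i (Kw r k) (Kl r k)))).
  apply: leq_sum => i _; case need: (needs_penalty i) => //.
  have [r [k [game_rk pen]]] := has_penalty_of_needs (ltn_ord i) need.
  exact: ngames_witness game_rk pen.
rewrite /ngames exchange_big mul2n -addnn -big_split /=; apply: leq_sum => g _.
set v := value g.1 g.2 == (-5)%R.
apply: (@leq_trans (\sum_(i < n) (v && var_player i (Kw g.1 g.2) : nat)
                   + \sum_(i < n) (v && var_player i (Kl g.1 g.2) : nat))).
  by rewrite -big_split; apply: leq_sum => i _; rewrite /penalty /v /value;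
    case: (_ == _); case: var_player; case: var_player.
by apply: leq_add; apply: sum_unique_le => [i j _ _ /andP[_ pi] /andP[_ pj] | i _ /andP[]//];
  apply: val_inj; exact: var_player_inj pi pj.
Qed.

Lemma positive_games_bound : ngames (fun r k => value r k == 1%R) <=
  n + num_sat majority phi + 4 * ngames (fun r k => value r k == (-5)%R).
Proof.
apply: leq_trans positive_games_le _.
apply: (@leq_trans (\sum_(i < n) (1 + clause_wins i (majority i) + 2 * needs_penalty i))).
  apply: leq_sum => i _.
  have -> : clause_wins i (majority i) = maxn (clause_wins i true) (clause_wins i false).
    by rewrite /majority; case: leqP => /= ?; lia.
  apply: variable_games_bound; last exact: clause_wins_var.
  by have := own_wins_le1 i true; have := own_wins_le1 i false; lia.
have := clause_wins_sat majority; have := needs_penalty_le.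
by rewrite big_split big_split sum1_card card_ord -big_distrr /=; lia.
Qed.

End Tournament.

Lemma tourn_value_split n phi N seat :
  tourn_value (v_phi n phi) N seat =
  ((ngames N (fun r k => value n phi seat r k == 1%R))%:Z
   - 5%:Z * (ngames N (fun r k => value n phi seat r k == (-5)%R))%:Z)%R.
Proof.
have v_phiC a b : v_phi n phi a b = v_phi n phi b a by apply: game_valC.
rewrite (tourn_value_games _ _ v_phiC) /ngames.
rewrite !(big_morph Posz PoszD (erefl (Posz 0))) mulr_sumr -sumrB.
apply: eq_bigr => g _; rewrite /value /v_phi.
by case: (game_val_cases phi (kind_of n (size phi) (winner seat g.1.+1 g.2))
                             (kind_of n (size phi) (loser seat g.1 g.2))) => [->|[->|->]].
Qed.

Lemma seat_of_val N (sigma : {perm 'I_N}) (i : 'I_N) : seat_of sigma i = (sigma^-1)%g i.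
Proof. by rewrite /seat_of valK. Qed.

Lemma seat_of_inj N (sigma : {perm 'I_N}) q q' :
  q < N -> q' < N -> seat_of sigma q = seat_of sigma q' -> q = q'.
Proof.
move=> lt_q lt_q'; rewrite -[q]/(val (Ordinal lt_q)) -[q']/(val (Ordinal lt_q')).
by rewrite !seat_of_val => /val_inj/perm_inj [].
Qed.

Lemma seat_of_onto N (sigma : {perm 'I_N}) p : p < N -> exists2 q, q < N & seat_of sigma q = p.
Proof.
by move=> lt_p; exists (sigma (Ordinal lt_p)); rewrite ?seat_of_val ?permK.
Qed.

Theorem lemma4 (n : nat) (phi : seq clause) (k : nat) :
  max23sat n phi ->
  (exists sigma : {perm 'I_(2 ^ nprime n)},
      ((k + n)%:Z <= T_value n phi sigma)%R) ->
  exists a : nat -> bool, k <= num_sat a phi.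
Proof.
move=> [_ phi_deg] [sigma le_value].
have seat_inj := @seat_of_inj _ sigma.
have top_seated : exists2 q, q < 2 ^ nprime n & seat_of sigma q = 0.
  by apply: seat_of_onto; rewrite expn_gt0.
exists (majority n phi (nprime n) (seat_of sigma)).
have := positive_games_bound seat_inj phi_deg top_seated.
by move: le_value; rewrite /T_value tourn_value_split; lia.
Qed.
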